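(* Let $G$ be a second-countable ample Hausdorff groupoid, let $R$ be a commutative unital ring with the discrete topology, let $T \le R^\times$, and let $(\Sigma, i, q)$ be a discrete twist by $T$ over $G$. Then $\Sigma$ is topologically trivial, i.e. there is a continuous map $P\colon G \to \Sigma$ with $q \circ P = \mathrm{id}_G$ and $P(G^{(0)}) \subseteq \Sigma^{(0)}$.
   Context: Groupoids are locally compact Hausdorff topological groupoids; $G$ is ample if it has a basis of compact open bisections (a bisection is a set contained in an open set on which $r$ and $s$ restrict to homeomorphisms onto open sets). A discrete twist by $T$ over $G$ is a sequence $G^{(0)} \times T \xrightarrow{i} \Sigma \xrightarrow{q} G$, where $T$ carries the discrete topology, $G^{(0)} \times T$ is the trivial group bundle with fibres $T$, $\Sigma$ is a Hausdorff groupoid with $\Sigma^{(0)} = i(G^{(0)} \times \{1\})$, and $i, q$ are continuous groupoid homomorphisms restricting to homeomorphisms of unit spaces, such that: (1) $i(\{x\} \times T) = q^{-1}(x)$ for all $x \in G^{(0)}$, $i$ is injective, and $q$ is a quotient map; (2) for each $\alpha \in G$ there are an open bisection $B_\alpha \ni \alpha$ of $G$ and a continuous $P_\alpha\colon B_\alpha \to \Sigma$ with $q \circ P_\alpha = \mathrm{id}_{B_\alpha}$ such that $(\beta,z) \mapsto i(r(\beta),z)P_\alpha(\beta)$ is a homeomorphism $B_\alpha \times T \to q^{-1}(B_\alpha)$; (3) $i(r(\varepsilon),z)\varepsilon = \varepsilon\, i(s(\varepsilon),z)$ for all $\varepsilon \in \Sigma$, $z \in T$. *)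

From mathcomp Require Import all_boot all_algebra.
From mathcomp Require Import boolp classical_sets functions cardinality topology.

Set Implicit Arguments.
Unset Strict Implicit.
Unset Printing Implicit Defensive.

Import GRing.Theory.
Local Open Scope classical_set_scope.

(* Groupoid operations on a carrier type X (the whole type is the groupoid).
   Units are elements of X: the unit space is the set of x with r x = x. *)
Record groupoid_ops (X : Type) := GroupoidOps {
  gr : X -> X;
  gs : X -> X;
  gmul : X -> X -> X;     (* product, meaningful on composable pairs *)
  ginv : X -> X
}.

Definition composable {X} (g : groupoid_ops X) (a b : X) : Prop :=
  gs g a = gr g b.

Definition gunits {X} (g : groupoid_ops X) : set X := [set x | gr g x = x].

Definition is_groupoid {X} (g : groupoid_ops X) : Prop :=
  forall a b c : X,
    (gr g (gr g a) = gr g a /\ gs g (gr g a) = gr g a /\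
     gr g (gs g a) = gs g a /\ gs g (gs g a) = gs g a) /\
    (composable g a b ->
       gr g (gmul g a b) = gr g a /\ gs g (gmul g a b) = gs g b) /\
    (composable g a b -> composable g b c ->
       gmul g (gmul g a b) c = gmul g a (gmul g b c)) /\
    (gmul g (gr g a) a = a /\ gmul g a (gs g a) = a) /\
    (gr g (ginv g a) = gs g a /\ gs g (ginv g a) = gr g a) /\
    (gmul g a (ginv g a) = gr g a /\ gmul g (ginv g a) a = gs g a).

Definition locally_compact_space (X : topologicalType) : Prop :=
  forall x : X, exists K : set X, compact K /\ nbhs x K.

Definition lch_groupoid {X : topologicalType} (g : groupoid_ops X) : Prop :=
  [/\ is_groupoid g,
      {within [set p : X * X | composable g p.1 p.2],
         continuous (fun p : X * X => gmul g p.1 p.2)},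
      continuous (ginv g),
      hausdorff_space X &
      locally_compact_space X].

Definition homeo_on {X Y : topologicalType} (A : set X) (B : set Y)
    (f : X -> Y) : Prop :=
  {within A, continuous f} /\
  exists h : Y -> X,
    [/\ {within B, continuous h},
        (forall x, A x -> B (f x) /\ h (f x) = x) &
        (forall y, B y -> A (h y) /\ f (h y) = y)].

Definition open_bisection {X : topologicalType} (g : groupoid_ops X)
    (U : set X) : Prop :=
  [/\ open U,
      open (gr g @` U), open (gs g @` U),
      homeo_on U (gr g @` U) (gr g) &
      homeo_on U (gs g @` U) (gs g)].

Definition bisection {X : topologicalType} (g : groupoid_ops X)
    (B : set X) : Prop :=
  exists U, open_bisection g U /\ B `<=` U.

Definition ample {X : topologicalType} (g : groupoid_ops X) : Prop :=
  forall (U : set X) (x : X), open U -> U x ->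
    exists B : set X, [/\ compact B, open B, bisection g B, B x & B `<=` U].

Definition quotient_map {X Y : topologicalType} (q : X -> Y) : Prop :=
  (forall y, exists x, q x = y) /\
  (forall V : set Y, open V <-> open (q @^-1` V)).

Definition ring_unit {R : comPzRingType} (x : R) : Prop :=
  exists y : R, (x * y = 1)%R.

Definition subgroup_of_units {R : comPzRingType} (T : set R) : Prop :=
  [/\ forall z, T z -> ring_unit z,
      T 1%R,
      (forall z w, T z -> T w -> T (z * w)%R) &
      (forall z, T z -> exists w, T w /\ (z * w = 1)%R)].

(* A discrete twist G^(0) x T --i--> Sigma --q--> G.
   i is a function G -> R -> Sigma, relevant on G^(0) x T; T carries the
   discrete topology (via the discrete topology on R). *)
Definition discrete_twist {G S : topologicalType} {R : comPzRingType}
    (T : set R) (gG : groupoid_ops G) (gS : groupoid_ops S)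
    (i : G -> R -> S) (q : S -> G) : Prop :=
  lch_groupoid gS /\
  gunits gS = [set i x 1%R | x in gunits gG] /\
  (forall x z w, gunits gG x -> T z -> T w ->
      composable gS (i x z) (i x w) /\
      gmul gS (i x z) (i x w) = i x (z * w)%R) /\
  {within [set p : G * discrete_topology R | gunits gG p.1 /\ T p.2],
     continuous (fun p : G * discrete_topology R => i p.1 p.2)} /\
  (forall a b, composable gS a b ->
      composable gG (q a) (q b) /\ q (gmul gS a b) = gmul gG (q a) (q b)) /\
  continuous q /\
  homeo_on (gunits gG) (gunits gS) (fun x => i x 1%R) /\
  homeo_on (gunits gS) (gunits gG) q /\
  (forall x, gunits gG x -> [set i x z | z in T] = q @^-1` [set x]) /\
  (forall x y z w, gunits gG x -> gunits gG y -> T z -> T w ->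
      i x z = i y w -> x = y /\ z = w) /\
  quotient_map q /\
  (forall alpha : G, exists (B : set G) (P : G -> S),
      [/\ open_bisection gG B, B alpha,
          {within B, continuous P},
          (forall beta, B beta -> q (P beta) = beta) &
          @homeo_on (G * discrete_topology R)%type S
            [set p | B p.1 /\ T p.2] (q @^-1` B)
            (fun p => gmul gS (i (gr gG p.1) p.2) (P p.1))]) /\
  (* (3) centrality; r(eps), s(eps) in Sigma^(0) identified with
     r(q eps), s(q eps) in G^(0) *)
  (forall (e : S) (z : R), T z ->
      gmul gS (i (gr gG (q e)) z) e = gmul gS e (i (gs gG (q e)) z)).

(* Locally, Sigma has continuous sections that send units to units: near a
   unit a, the unit space contains the open set r(B) for a bisection B at a,
   and x |-> i(x, 1) is a section there; near a non-unit, the unit space is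
   avoided (it is closed, G being Hausdorff) and the local trivialisation P_a
   is a section.  Ampleness shrinks these domains to clopen sets and second
   countability yields countably many clopen domains C_n covering G.  Taking
   at each point the section of the least n with a in C_n is continuous,
   because the points whose least index is n form the open set
   C_n \ (C_0 u ... u C_{n-1}). *)

From mathcomp Require Import all_boot all_algebra.
From mathcomp Require Import boolp classical_sets functions cardinality topology.

Set Implicit Arguments.
Unset Strict Implicit.
Unset Printing Implicit Defensive.

Local Open Scope classical_set_scope.

Section ClopenGluing.
Variables (X : topologicalType) (C : nat -> set X).
Hypotheses (C_open : forall n, open (C n)) (C_closed : forall n, closed (C n))
  (C_cover : forall x, exists n, C n x).

Let cover_index_exists x : exists n, `[< C n x >].
Proof. by have [n Cnx] := C_cover x; exists n; apply/asboolP. Qed.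

Definition first_cover (x : X) : nat := ex_minn (cover_index_exists x).

Lemma first_coverP x :
  C (first_cover x) x /\ forall k, C k x -> (first_cover x <= k)%N.
Proof.
rewrite /first_cover; case: ex_minnP => n /asboolP Cnx n_min.
by split=> // k /asboolP /n_min.
Qed.

Lemma nbhs_first_cover x : \forall y \near x, first_cover y = first_cover x.
Proof.
set n := first_cover x; have [Cnx n_min] := first_coverP x.
have open_first : open (C n `\` \bigcup_(k in `I_n) C k).
  by apply: openI => //; apply: closed_openC; apply: closed_bigcup.
apply: (filterS _ (open_nbhs_nbhs (conj open_first _))).
- move=> y [Cny not_earlier]; have [Cy y_min] := first_coverP y.
  apply/eqP; rewrite eqn_leq y_min //= leqNgt; apply/negP => lt_yn.
  by apply: not_earlier; exists (first_cover y).
- split=> // -[k /= lt_kn Ckx].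
  by have := n_min k Ckx; rewrite leqNgt lt_kn.
Qed.

Lemma glue_clopen_cover (Y : topologicalType) (f : nat -> X -> Y) :
  (forall n, {in C n, continuous (f n)}) ->
  exists g : X -> Y, continuous g /\ forall x, exists2 n, C n x & g x = f n x.
Proof.
move=> f_cont; exists (fun x => f (first_cover x) x); split; last first.
  by move=> x; exists (first_cover x); first exact: (first_coverP x).1.
move=> x W; have [Cx _] := first_coverP x.
move=> /(f_cont _ x (mem_set Cx)); apply: filterS2 (nbhs_first_cover x).
by move=> y /= ->.
Qed.

End ClopenGluing.

Lemma second_countable_cover (X : topologicalType) (good : set X -> Prop) :
  @second_countable X -> good set0 ->
  (forall x : X, exists2 U, good U & nbhs x U) ->
  exists C : nat -> set X, (forall n, good (C n)) /\ forall x, exists n, C n x.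
Proof.
move=> [B /countable_injP [idx idx_inj] [_ B_basis]] good0 good_nbhs.
have hull n : exists V, good V /\ forall U, B U -> idx U = n ->
    (exists2 W, good W & U `<=` W) -> U `<=` V.
  have [[U [BU idxU [W goodW UW]]] | no_hull] :=
    pselect (exists U, [/\ B U, idx U = n & exists2 W, good W & U `<=` W]).
  - exists W; split=> // U' BU' idxU' _.
    suff -> : U' = U by [].
    by apply: idx_inj; rewrite ?inE // idxU idxU'.
  - exists set0; split=> // U BU idxU hullU.
    by exfalso; apply: no_hull; exists U.
have [C C_hull] := choice hull; exists C; split=> [n | x].
  exact: (C_hull n).1.
have [W goodW nbhsW] := good_nbhs x.
have [U [BU Ux] UW] := B_basis x W nbhsW.
exists (idx U); apply: (C_hull (idx U)).2 Ux => //.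
by exists W.
Qed.

Lemma nbhs_not_fixed (X : topologicalType) (f : X -> X) (a : X) :
  hausdorff_space X -> {for a, continuous f} -> f a <> a ->
  \forall b \near a, f b <> b.
Proof.
move=> X_hausdorff f_cont fa_neq; apply: contrapT => not_near; apply: fa_neq.
apply/esym/X_hausdorff => A W nbhsA nbhsW.
have nbhsAW : nbhs a (A `&` f @^-1` W) by apply: filterI => //; exact: f_cont.
have [b [[Ab Wfb] fb]] : exists b, (A `&` f @^-1` W) b /\ f b = b.
  apply: contrapT => no_fixed; apply: not_near.
  apply: filterS nbhsAW => b AWb fb.
  by apply: no_fixed; exists b.
by exists b; split=> //; rewrite -fb.
Qed.

Lemma ample_clopen_nbhs (G : topologicalType) (gG : groupoid_ops G)
    (a : G) (U : set G) :
  hausdorff_space G -> ample gG -> nbhs a U ->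
  exists2 K, [/\ open K, closed K & K a] & K `<=` U.
Proof.
move=> G_hausdorff G_ample; rewrite nbhsE => -[V [oV Va] VU].
have [K [cK oK _ Ka KV]] := G_ample V a oV Va.
by exists K; [split=> //; exact: compact_closed | exact: subset_trans VU].
Qed.

Section TwistLocalSections.
Variables (G S : topologicalType) (gG : groupoid_ops G) (gS : groupoid_ops S)
  (R : comPzRingType) (T : set R) (i : G -> R -> S) (q : S -> G).
Hypotheses (G_groupoid : is_groupoid gG) (G_hausdorff : hausdorff_space G)
  (G_ample : ample gG) (T1 : T 1%R) (twist : discrete_twist T gG gS i q).

Definition unit_preserving_section (C : set G) (P : G -> S) :=
  [/\ {in C, continuous P}, forall b, C b -> q (P b) = b &
      forall b, C b -> gunits gG b -> gunits gS (P b)].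

Definition clopen_section_domain (C : set G) :=
  [/\ open C, closed C & exists P, unit_preserving_section C P].

Lemma range_unit (b : G) : gunits gG (gr gG b).
Proof. by have [[] ] := G_groupoid b b b. Qed.

Lemma unit_clopen_section (a : G) :
  gunits gG a -> exists2 K, clopen_section_domain K & K a.
Proof.
move=> unit_a.
case: twist => _ [units_S [_ [_ [_ [_ [[i_cont _]
  [_ [fibre [_ [_ [local_triv _]]]]]]]]]]].
have [B [_ [[_ open_rB _ _ _] Ba _ _ _]]] := local_triv a.
have : nbhs a (gr gG @` B) by apply: open_nbhs_nbhs; split=> //; exists a.
move=> /(ample_clopen_nbhs G_hausdorff G_ample) [K [oK cK Ka] K_rB].
have K_units : K `<=` gunits gG by move=> b /K_rB [c _ <-]; exact: range_unit.
exists K => //; split=> //; exists (fun b => i b 1%R); split.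
- by rewrite -continuous_open_subspace //; exact: continuous_subspaceW i_cont.
- move=> b Kb; suff : (q @^-1` [set b]) (i b 1%R) by [].
  by rewrite -fibre; [exists 1%R | exact: K_units].
- by move=> b _ unit_b; rewrite units_S; exists b.
Qed.

Lemma nonunit_clopen_section (a : G) :
  ~ gunits gG a -> exists2 K, clopen_section_domain K & K a.
Proof.
move=> nonunit_a.
case: twist => _ [_ [_ [_ [_ [_ [_ [_ [_ [_ [_ [local_triv _]]]]]]]]]]].
have [B [P [[oB _ _ [r_cont _] _] Ba P_cont P_sec _]]] := local_triv a.
have r_cont_a : {for a, continuous (gr gG)}.
  by move: r_cont; rewrite continuous_open_subspace //; apply; exact: mem_set.
have : nbhs a (B `&` [set b | gr gG b <> b]).
  by apply: filterI; [exact: open_nbhs_nbhs | exact: nbhs_not_fixed].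
move=> /(ample_clopen_nbhs G_hausdorff G_ample) [K [oK cK Ka] K_B].
exists K => //; split=> //; exists P; split.
- rewrite -continuous_open_subspace //; apply: continuous_subspaceW P_cont.
  by move=> b /K_B [].
- by move=> b /K_B [Bb _]; exact: P_sec.
- by move=> b /K_B [_ nonunit_b].
Qed.

Lemma clopen_section_nbhs (a : G) :
  exists2 K, clopen_section_domain K & nbhs a K.
Proof.
have [K K_domain Ka] : exists2 K, clopen_section_domain K & K a.
  by have [/unit_clopen_section | /nonunit_clopen_section] :=
    pselect (gunits gG a).
exists K => //; case: K_domain => oK _ _; exact: open_nbhs_nbhs.
Qed.

End TwistLocalSections.

Theorem theorem4p10 (G S : topologicalType) (gG : groupoid_ops G)
    (gS : groupoid_ops S) (R : comPzRingType) (T : set R)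
    (i : G -> R -> S) (q : S -> G) :
  lch_groupoid gG -> ample gG -> @second_countable G ->
  subgroup_of_units T ->
  discrete_twist T gG gS i q ->
  exists P : G -> S,
    [/\ continuous P,
        (forall a : G, q (P a) = a) &
        P @` gunits gG `<=` gunits gS].
Proof.
move=> [G_groupoid _ _ G_hausdorff _] G_ample G_countable [_ T1 _ _] twist.
have empty_domain : clopen_section_domain gG gS q set0.
  split; [exact: open0 | exact: closed0 | exists (fun b => i b 1%R)].
  by split=> // b /set_mem.
have [C [C_domain C_cover]] := second_countable_cover G_countable empty_domain
  (clopen_section_nbhs G_groupoid G_hausdorff G_ample T1 twist).
have /choice [P P_sec] :
    forall n, exists P, unit_preserving_section gG gS q (C n) P.
  by move=> n; have [_ _] := C_domain n.
have C_open n : open (C n) by case: (C_domain n).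
have C_closed n : closed (C n) by case: (C_domain n).
have [|g [g_cont g_glue]] := glue_clopen_cover C_open C_closed C_cover (f := P).
  by move=> n; case: (P_sec n).
exists g; split=> // [a | _ [a unit_a <-]]; have [n Cna ->] := g_glue a;
  have [_ P_q P_units] := P_sec n; [exact: P_q | exact: P_units].
Qed.
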